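(* Let $K$ be a field and $X$ a finite connected poset. Let $\theta:B\to B$ be an admissible bijection which is monotone on maximal chains in $X$, and let $\sigma:X^2_<\to K^*$ be compatible with $\theta$. Then there exists an elementary Lie automorphism $\varphi$ of $I(X,K)$ such that $\varphi(e_{xy})=\sigma(x,y)\theta(e_{xy})$ for all $x<y$.
   Context: A walk is a sequence $u_0,\dots,u_m$ in $X$ such that for each $i$ one of $u_i,u_{i+1}$ covers the other; closed if $u_0=u_m$; $X$ is connected if any two elements are joined by a walk. $I(X,K)$ is the incidence algebra: functions $f:X\times X\to K$ with $f(x,y)=0$ unless $x\le y$, product $(fg)(x,y)=\sum_{x\le t\le y}f(x,t)g(t,y)$; $e_{xy}$ ($x\le y$) is the basis element equal to $1$ at $(x,y)$ and $0$ elsewhere. $B=\{e_{xy}:x<y\}$, $X^2_<=\{(x,y):x<y\}$. A Lie automorphism is a bijective linear map preserving $[f,g]=fg-gf$. With $l(\lfloor x,y\rfloor)$ the maximal length of a chain in $\{z:x\le z\le y\}$ and $L_i=\mathrm{span}_K\{e_{xy}:l(\lfloor x,y\rfloor)=i\}$, for a Lie automorphism $\psi$ let $\widetilde\psi$ send $e_{xy}\in L_i$ to the $L_i$-component of $\psi(e_{xy})$; a Lie automorphism is elementary if it equals $\widetilde\psi$ for some Lie automorphism $\psi$ (equivalently, it maps each $L_i$ into $L_i$). $\theta$ is monotone on maximal chains if for every maximal chain $u_1<\dots<u_m$ of $X$ there is a maximal chain $v_1<\dots<v_m$ with either $\theta(e_{u_iu_j})=e_{v_iv_j}$ for all $i<j$,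 or $\theta(e_{u_iu_j})=e_{v_{m-j+1}v_{m-i+1}}$ for all $i<j$. For a closed walk $\Gamma:u_0,\dots,u_m=u_0$ and $z\in X$: $s^+(z)$ = number of $i$ with $u_i<u_{i+1}$ and $\theta(e_{zw})=e_{u_iu_{i+1}}$ for some $w>z$; $s^-(z)$ = number of $i$ with $u_i>u_{i+1}$ and $\theta(e_{zw})=e_{u_{i+1}u_i}$ for some $w>z$; $t^+(z)$ = number of $i$ with $u_i<u_{i+1}$ and $\theta(e_{wz})=e_{u_iu_{i+1}}$ for some $w<z$; $t^-(z)$ = number of $i$ with $u_i>u_{i+1}$ and $\theta(e_{wz})=e_{u_{i+1}u_i}$ for some $w<z$. $\theta$ is admissible if $s^+(z)-s^-(z)=t^+(z)-t^-(z)$ for all closed walks and all $z$. $\sigma$ is compatible with $\theta$ if for all $x<y<z$: $\sigma(x,z)=\sigma(x,y)\sigma(y,z)$ whenever $\theta(e_{xz})=\theta(e_{xy})\theta(e_{yz})$, and $\sigma(x,z)=-\sigma(x,y)\sigma(y,z)$ whenever $\theta(e_{xz})=\theta(e_{yz})\theta(e_{xy})$. *)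

From HB Require Import structures.
From mathcomp Require Import all_boot all_order all_algebra.
Set Implicit Arguments. Unset Strict Implicit. Unset Printing Implicit Defensive.
Import Order.TTheory GRing.Theory.
Local Open Scope order_scope.

Section Incidence.
Variables (d : Order.disp_t) (X : finPOrderType d) (K : fieldType).

(* Elements of I(X,K) are represented inside the K-vector space of all
   functions X*X -> K, as those vanishing off {(x,y) : x <= y}. *)
Local Notation ifun := {ffun X * X -> K}.

Definition incid (f : ifun) : bool :=
  [forall p : X * X, ~~ (p.1 <= p.2) ==> (f p == 0%R)].

Definition imul (f g : ifun) : ifun :=
  [ffun p : X * X => (\sum_(t : X | ((p.1 <= t) && (t <= p.2))%O) f (p.1, t) * g (t, p.2))%R].

Definition iscale (a : K) (f : ifun) : ifun := [ffun p => a * f p]%R.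

Definition ilie (f g : ifun) : ifun := (imul f g - imul g f)%R.

Definition eu (x y : X) : ifun := [ffun p : X * X => if p == (x, y) then 1%R else 0%R].

Definition lie_aut (phi : ifun -> ifun) : Prop :=
  [/\ (forall f, incid f -> incid (phi f)),
      (forall (a : K) f g, incid f -> incid g -> phi (iscale a f + g)%R = (iscale a (phi f) + phi g)%R),
      (forall f g, incid f -> incid g -> phi f = phi g -> f = g),
      (forall g, incid g -> exists2 f, incid f & phi f = g) &
      (forall f g, incid f -> incid g -> phi (ilie f g) = ilie (phi f) (phi g))].

Definition chain_in (x y : X) (n : nat) : bool :=
  [exists s : n.+1.-tuple X, sorted <%O (tval s) && all (fun z => (x <= z) && (z <= y)) s].

Definition lint (x y : X) : nat := (\max_(n < #|X|.+1 | chain_in x y n) n)%N.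

Definition projL (i : nat) (f : ifun) : ifun :=
  [ffun p : X * X => if (p.1 <= p.2) && (lint p.1 p.2 == i) then f p else 0%R].

(* elementary Lie automorphism: phi = psi~ for some Lie automorphism psi,
   where psi~ is the linear map sending e_xy (in L_i) to the L_i-component
   of psi(e_xy). *)
Definition elementary (phi : ifun -> ifun) : Prop :=
  lie_aut phi /\
  exists psi, lie_aut psi /\
    forall x y : X, x <= y -> phi (eu x y) = projL (lint x y) (psi (eu x y)).

Definition covers (u v : X) : bool := (v < u) && [forall w, ~~ ((v < w) && (w < u))].
Definition adj (u v : X) : bool := covers u v || covers v u.

Definition connected_poset : Prop :=
  forall x y : X, exists s : seq X, path adj x s /\ last x s = y.

(* B = {e_xy : x < y}, indexed by X^2_< *)
Definition Bidx := {p : X * X | p.1 < p.2}.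

(* the pair (u,v) with theta(e_xy) = e_uv (meaningful for x < y) *)
Definition thv (theta : Bidx -> Bidx) (x y : X) : X * X :=
  if insub (x, y) is Some b then val (theta b) else (x, y).

Definition thE (theta : Bidx -> Bidx) (x y : X) : ifun :=
  eu (thv theta x y).1 (thv theta x y).2.

Definition max_chain (s : seq X) : bool :=
  sorted <%O s && [forall z, (z \notin s) ==> has (fun w => ~~ (z >=< w)) s].

Definition monotone_max_chains (theta : Bidx -> Bidx) : Prop :=
  forall s : seq X, max_chain s ->
  exists t : seq X, [/\ max_chain t, size t = size s &
    (forall x0 : X, forall i j, (i < j < size s)%N ->
        thv theta (nth x0 s i) (nth x0 s j) = (nth x0 t i, nth x0 t j)) \/
    (forall x0 : X, forall i j, (i < j < size s)%N ->
        thv theta (nth x0 s i) (nth x0 s j) =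
          (nth x0 t (size s - 1 - j), nth x0 t (size s - 1 - i)))].

(* counts along a closed walk u0 :: s (u_i = nth u0 (u0::s) i,
   u_{i+1} = nth u0 s i, for i < m = size s) *)
Definition cnt (P : X -> X -> bool) (u0 : X) (s : seq X) : nat :=
  count (fun i => P (nth u0 (u0 :: s) i) (nth u0 s i)) (iota 0 (size s)).

Definition s_plus theta z a b :=
  (a < b) && [exists w, (z < w) && (thv theta z w == (a, b))].
Definition s_minus theta z a b :=
  (b < a) && [exists w, (z < w) && (thv theta z w == (b, a))].
Definition t_plus theta z a b :=
  (a < b) && [exists w, (w < z) && (thv theta w z == (a, b))].
Definition t_minus theta z a b :=
  (b < a) && [exists w, (w < z) && (thv theta w z == (b, a))].

Definition admissible (theta : Bidx -> Bidx) : Prop :=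
  forall (u0 : X) (s : seq X), path adj u0 s -> last u0 s = u0 ->
  forall z : X,
    ((cnt (s_plus theta z) u0 s)%:Z - (cnt (s_minus theta z) u0 s)%:Z =
     (cnt (t_plus theta z) u0 s)%:Z - (cnt (t_minus theta z) u0 s)%:Z)%R.

Definition compatible (theta : Bidx -> Bidx) (sigma : X -> X -> K) : Prop :=
  forall x y z : X, x < y -> y < z ->
    (thE theta x z = imul (thE theta x y) (thE theta y z) ->
       sigma x z = (sigma x y * sigma y z)%R) /\
    (thE theta x z = imul (thE theta y z) (thE theta x y) ->
       sigma x z = (- (sigma x y * sigma y z))%R).

End Incidence.

(** Monotonicity on maximal chains means that for x < y < z the basis elements
    theta(e_xy) and theta(e_yz) share an endpoint and together span theta(e_xz), in one
    order or the other.  Since theta is a bijection of a finite set, this correspondence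
    between chains x < y < z is itself a bijection; hence theta carries products of basis
    elements to products (up to the order, which the compatibility of sigma compensates)
    and preserves the lengths l(|x,y|).

    Off the diagonal phi is forced: phi(e_xy) = sigma(x,y) theta(e_xy).  On the diagonal
    put phi(e_xx) = sum_u c(x,u) e_uu.  The bracket [e_xx, e_yz] = ([x = y] - [x = z]) e_yz
    is preserved iff c(x,u) - c(x,v) = [x = y] - [x = z] whenever theta(e_yz) = e_uv.
    Admissibility says exactly that these increments sum to zero along every closed walk
    of the Hasse diagram, so by connectedness they are the differences of a potential,
    which we normalise by c(x,z0) = [x = z0]; connectedness again shows that the matrix c
    is invertible, which makes phi bijective. *)

From Pilot Require Import Defs.
From HB Require Import structures.
From mathcomp Require Import all_boot all_order all_algebra.
From mathcomp Require Import zify ring.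
Import Order.TTheory GRing.Theory.
Local Open Scope order_scope.

Set Implicit Arguments. Unset Strict Implicit. Unset Printing Implicit Defensive.

Section FiniteSums.
Local Open Scope ring_scope.

Lemma square_system_solvable (I : finType) (K : fieldType) (c : I -> I -> K) :
  (forall lam : I -> K, (forall u, \sum_x lam x * c x u = 0) -> forall x, lam x = 0) ->
  forall h : I -> K, exists lam : I -> K, forall u, \sum_x lam x * c x u = h u.
Proof.
move=> c_inj h; pose n := #|I|.
pose M : 'M[K]_n := \matrix_(i < n, j < n) c (enum_val i) (enum_val j).
have sumE (F : I -> K) : \sum_x F x = \sum_(i < n) F (enum_val i) by rewrite -(big_enum_val F).
have M_free : row_free M.
  apply: inj_row_free => v vM0; apply/rowP => i; rewrite mxE -[i]enum_valK.
  apply: (c_inj (fun x => v 0 (enum_rank x))) => u.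
  have := congr1 (fun A : 'M[K]_(1, n) => A 0 (enum_rank u)) vM0; rewrite !mxE => vMu.
  by rewrite -[RHS]vMu sumE; apply: eq_bigr => j _; rewrite enum_valK mxE enum_rankK.
pose r : 'rV[K]_n := \row_j h (enum_val j).
pose lam := r *m invmx M.
exists (fun x => lam 0 (enum_rank x)) => u.
have [i ->] : exists i : 'I_n, u = enum_val i by exists (enum_rank u); rewrite enum_rankK.
have : lam *m M = r by rewrite mulmxKV // -row_free_unit.
move/(congr1 (fun A : 'M[K]_(1, n) => A 0 i)); rewrite !mxE => <-.
by rewrite sumE; apply: eq_bigr => j _; rewrite enum_valK [M j i]mxE.
Qed.

Lemma sumr_mul_eq (I : finType) (R : pzSemiRingType) (F : I -> R) (a : I) :
  \sum_i F i * (a == i)%:R = F a.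
Proof.
rewrite (bigD1 a) //= eqxx mulr1 big1 ?addr0 // => i /negPf.
by rewrite eq_sym => ->; rewrite mulr0.
Qed.

Lemma sumr_if_eq (T : finType) (R : pzSemiRingType) (P : pred T) (b : T) (F : T -> R) :
  \sum_(t | P t) (if t == b then F t else 0) = if P b then F b else 0.
Proof.
rewrite -big_mkcondr; case: (boolP (P b)) => Pb.
  by rewrite (big_pred1 b) // => t /=; case: eqP => [->|]; rewrite ?Pb ?andbF.
by rewrite big_pred0 // => t; case: eqP => [->|]; rewrite ?(negPf Pb) ?andbF.
Qed.

End FiniteSums.

Section SortedChains.
Variables (d : Order.disp_t) (T : porderType d).

Lemma sorted_comparable (s : seq T) : sorted <%O s -> {in s &, forall a b, a >=< b}.
Proof.
move=> ss a b as_ bs; rewrite -(nth_index a as_) -(nth_index a bs) /Order.comparable.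
rewrite !(lt_sorted_leq_nth a ss) ?inE ?index_mem //; exact: leq_total.
Qed.

Lemma sort_lt_sorted (s : seq T) :
  uniq s -> {in s &, forall a b, a >=< b} -> sorted <%O (sort <=%O s).
Proof.
by move=> us cs; rewrite lt_sorted_uniq_le sort_uniq us (sort_sorted_in cs (allss s)).
Qed.

Lemma index_lt_sorted (s : seq T) a b : sorted <%O s -> a \in s -> b \in s -> a < b ->
  (index a s < index b s)%N.
Proof.
move=> ss as_ bs ab; rewrite ltnNge; apply/negP => ba.
have sle : sorted <=%O s by move: ss; rewrite lt_sorted_uniq_le => /andP [].
have := sorted_leq_index le_trans le_refl sle b a bs as_ ba.
by move=> /(lt_le_trans ab); rewrite ltxx.
Qed.

Lemma interval_comparable (x y : T) (s : seq T) : x <= y -> sorted <%O s ->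
  all (fun z => (x <= z) && (z <= y)) s -> {in [:: x, y & s] &, forall a b, a >=< b}.
Proof.
move=> xy ss s_in.
have hx z : z \in s -> x >=< z by move=> /(allP s_in) /andP [xz _]; exact: le_comparable.
have hy z : z \in s -> y >=< z.
  by move=> /(allP s_in) /andP [_ zy]; rewrite comparable_sym; exact: le_comparable.
move=> a b; rewrite !inE => /or3P [/eqP-> | /eqP-> | as_] /or3P [/eqP-> | /eqP-> | bs].
- exact: comparablexx.
- exact: le_comparable xy.
- exact: hx.
- by rewrite comparable_sym le_comparable.
- exact: comparablexx.
- exact: hy.
- by rewrite comparable_sym hx.
- by rewrite comparable_sym hy.
- exact: sorted_comparable ss a b as_ bs.
Qed.

End SortedChains.

Section MaximalChains.
Variables (d : Order.disp_t) (X : finPOrderType d).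

Lemma size_lt_sorted (s : seq X) : sorted <%O s -> (size s <= #|X|)%N.
Proof. by rewrite lt_sorted_uniq_le => /andP [/card_uniqP <- _]; exact: max_card. Qed.

Lemma non_max_chain_ext (m : seq X) : sorted <%O m -> ~~ max_chain m ->
  exists2 m', sorted <%O m' & (size m < size m')%N /\ {subset m <= m'}.
Proof.
move=> sm; rewrite /max_chain sm negb_forall => /existsP [z].
rewrite negb_imply => /andP [zm /hasPn zc].
have cm := sorted_comparable sm.
exists (sort <=%O (z :: m)); last first.
  by split=> [|x xm]; rewrite ?size_sort // mem_sort inE xm orbT.
apply: sort_lt_sorted.
  by move: sm; rewrite /= zm lt_sorted_uniq_le => /andP [].
move=> a b; rewrite !inE => /predU1P [-> | am] /predU1P [-> | bm].
- exact: comparablexx.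
- by have := zc b bm; rewrite negbK.
- by have := zc a am; rewrite negbK comparable_sym.
- exact: cm.
Qed.

Lemma max_chain_ext (A : seq X) : {in A &, forall a b, a >=< b} ->
  exists2 m, max_chain m & {subset A <= m}.
Proof.
move=> cA.
suff ext n m : sorted <%O m -> {subset A <= m} -> (#|X| - size m <= n)%N ->
    exists2 m', max_chain m' & {subset A <= m'}.
  apply: (ext #|X| (sort <=%O (undup A))); last by rewrite leq_subr.
    by apply: sort_lt_sorted; rewrite ?undup_uniq // => a b; rewrite !mem_undup; apply: cA.
  by move=> x; rewrite mem_sort mem_undup.
elim: n m => [|n IH] m sm Am hn;
  (have [mc|nmc] := boolP (max_chain m); first by exists m);
  have [m' sm' [lt_mm' mm']] := non_max_chain_ext sm nmc; have le_m'X := size_lt_sorted sm'.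
  by move: hn; rewrite leqn0 subn_eq0 leqNgt (leq_trans lt_mm' le_m'X).
apply: (IH m' sm') => [x /Am /mm' //|].
by apply: leq_trans (leq_sub2l _ lt_mm') _; rewrite subnS -subn1 leq_subLR add1n.
Qed.

End MaximalChains.

Section IntervalLength.
Variables (d : Order.disp_t) (X : finPOrderType d).

Lemma chain_inP (x y : X) n : reflect
  (exists s : seq X, [/\ size s = n.+1, sorted <%O s & all (fun z => (x <= z) && (z <= y)) s])
  (chain_in x y n).
Proof.
apply: (iffP existsP) => [[t /andP [st s_in]]|[s [size_s ss s_in]]].
  by exists (tval t); rewrite size_tuple.
by exists (tcast size_s (in_tuple s)); rewrite val_tcast ss s_in.
Qed.

Lemma chain_in_bound (x y : X) n : chain_in x y n -> (n < #|X|.+1)%N.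
Proof. by move/chain_inP => [s [<- /size_lt_sorted /leqW]]. Qed.

Lemma lint_ge (x y : X) n : chain_in x y n -> (n <= lint x y)%N.
Proof. by move=> xyn; apply: (leq_bigmax_cond (Ordinal (chain_in_bound xyn))). Qed.

Lemma lint_chain_in (x y : X) : x <= y -> chain_in x y (lint x y).
Proof.
move=> xy; have x0 : chain_in x y 0 by apply/chain_inP; exists [:: x]; rewrite /= le_refl xy.
have chains_gt0 : (0 < #|[pred n : 'I_#|X|.+1 | chain_in x y n]|)%N.
  by apply/card_gt0P; exists (Ordinal (chain_in_bound x0)).
rewrite [lint x y](_ : _ = \max_(i in [pred n : 'I_#|X|.+1 | chain_in x y n]) i)%N //.
by have [i i_in ->] := eq_bigmax_cond (fun i : 'I_#|X|.+1 => nat_of_ord i) chains_gt0.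
Qed.

Lemma lint_refl (x : X) : lint x x = 0%N.
Proof.
have /chain_inP [[|a [|b s]] [//= [<-] ss s_in]] // := lint_chain_in (le_refl x).
move: ss s_in => /= /andP [ab _] /and3P [/andP [xa ax] /andP [xb bx] _].
have ea : a = x by apply/le_anti; rewrite ax xa.
have eb : b = x by apply/le_anti; rewrite bx xb.
by rewrite ea eb ltxx in ab.
Qed.

Lemma card_interval_lt (a b u v : X) : a <= b -> a <= u -> v <= b -> (u != a) || (v != b) ->
  (#|[pred t | (u <= t)%O && (t <= v)%O]| < #|[pred t | (a <= t)%O && (t <= b)%O]|)%N.
Proof.
move=> ab au vb uv; apply: proper_card; apply/properP; split.
  by apply/subsetP => t; rewrite !inE => /andP [ut tv]; rewrite (le_trans au ut) (le_trans tv vb).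
case/orP: uv => [ua | vb'].
  have au' : a < u by rewrite lt_neqAle eq_sym ua au.
  by exists a; rewrite !inE ?le_refl ?ab ?(lt_geF au').
have vb'' : v < b by rewrite lt_neqAle vb' vb.
by exists b; rewrite !inE ?le_refl ?ab ?(lt_geF vb'') ?andbF.
Qed.

End IntervalLength.

Lemma leq_sum_eq (I : finType) (F G : I -> nat) :
  (forall i, F i <= G i)%N -> (\sum_i F i = \sum_i G i)%N -> forall i, F i = G i.
Proof.
move=> FG sumFG i; apply/eqP; rewrite eqn_leq FG leqNgt; apply/negP => FGi.
have := leq_add FGi (@leq_sum I (index_enum I) (predC1 i) F G (fun j _ => FG j)).
by rewrite (bigD1 i) // [in RHS](bigD1 i) //= in sumFG; rewrite addSn sumFG ltnn.
Qed.

Section ThetaAction.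
Variables (d : Order.disp_t) (X : finPOrderType d) (theta : Bidx X -> Bidx X).
Hypothesis theta_inj : injective theta.
Hypothesis theta_mono : monotone_max_chains theta.

Lemma thvE (x y : X) (xy : x < y) : thv theta x y = val (theta (exist _ (x, y) xy)).
Proof. by rewrite /thv insubT. Qed.

Lemma thv_lt (x y : X) : x < y -> (thv theta x y).1 < (thv theta x y).2.
Proof. by move=> xy; rewrite (thvE xy); case: (theta _). Qed.

Lemma thv_inj (x y x' y' : X) : x < y -> x' < y' ->
  thv theta x y = thv theta x' y' -> (x, y) = (x', y').
Proof. by move=> xy xy'; rewrite (thvE xy) (thvE xy') => /val_inj /theta_inj /(congr1 val). Qed.

Lemma thv_on_chain (A : seq X) : {in A &, forall a b, a >=< b} ->
  exists (f : X -> X) (r : bool), forall a b, a \in A -> b \in A -> a < b ->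
    thv theta a b = if r then (f b, f a) else (f a, f b).
Proof.
move=> cA; have [m mc Am] := max_chain_ext cA; have sm : sorted <%O m by case/andP: mc.
have [t [_ st [H|H]]] := theta_mono mc.
- exists (fun z => nth z t (index z m)), false => a b /Am am /Am bm ab /=.
  have := H a (index a m) (index b m); rewrite index_lt_sorted // index_mem bm.
  rewrite !nth_index // => /(_ isT) ->.
  by congr pair; apply: set_nth_default; rewrite st index_mem.
- exists (fun z => nth z t (size m - 1 - index z m)), true => a b /Am am /Am bm ab /=.
  have := H a (index a m) (index b m); rewrite index_lt_sorted // index_mem bm.
  rewrite !nth_index // => /(_ isT) ->.
  have m0 : (0 < size m)%N by case: (m) am.
  by congr pair; apply: set_nth_default; rewrite st (leq_ltn_trans (leq_subr _ _)) // subn1 ltn_predL.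
Qed.

Definition thv_split (x y z b : X) : Prop :=
  (thv theta x y = ((thv theta x z).1, b) /\ thv theta y z = (b, (thv theta x z).2)) \/
  (thv theta x y = (b, (thv theta x z).2) /\ thv theta y z = ((thv theta x z).1, b)).

Definition midv (x y z : X) : X :=
  if (thv theta x y).1 == (thv theta x z).1 then (thv theta x y).2 else (thv theta x y).1.

Lemma thv_split_ex (x y z : X) : x < y -> y < z -> exists b, thv_split x y z b.
Proof.
move=> xy yz; have xz := lt_trans xy yz.
have cA : {in [:: x; y; z] &, forall a b, a >=< b}.
  apply: sorted_comparable; by rewrite /= xy yz.
have [f [r H]] := thv_on_chain cA; exists (f y); rewrite /thv_split !H ?inE ?eqxx ?orbT //.
by case: (r); [right | left].
Qed.

Lemma midv_split (x y z b : X) : x < y -> y < z -> thv_split x y z b ->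
  [/\ midv x y z = b, (thv theta x z).1 < b & b < (thv theta x z).2].
Proof.
move=> xy yz; rewrite /midv.
case=> [[e1 e2]|[e1 e2]]; have := thv_lt xy; have := thv_lt yz; rewrite e1 e2 /= => bc ab.
  by rewrite eqxx.
by rewrite (gt_eqF bc).
Qed.

Lemma thv_split_midv (x y z : X) : x < y -> y < z ->
  [/\ thv_split x y z (midv x y z),
      (thv theta x z).1 < midv x y z & midv x y z < (thv theta x z).2].
Proof.
move=> xy yz; have [b sb] := thv_split_ex xy yz.
by have [-> ab bc] := midv_split xy yz sb.
Qed.

Definition triple := {t : X * X * X | (t.1.1 < t.1.2) && (t.1.2 < t.2)}.

Definition thv_triple (t : X * X * X) : X * X * X :=
  let: (x, y, z) := t in ((thv theta x z).1, midv x y z, (thv theta x z).2).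

Lemma thv_tripleP (t : triple) :
  let u := thv_triple (val t) in (u.1.1 < u.1.2) && (u.1.2 < u.2).
Proof.
case: t => [[[x y] z]] /= /andP [xy yz].
by have [_ -> ->] := thv_split_midv xy yz.
Qed.

Definition theta_triple (t : triple) : triple := exist _ (thv_triple (val t)) (thv_tripleP t).

Lemma theta_triple_inj : injective theta_triple.
Proof.
move=> [[[x y] z] hxyz] [[[x' y'] z'] hxyz'] /(congr1 val) /= e; apply: val_inj => /=.
case/andP: (hxyz) => /= xy yz; case/andP: (hxyz') => /= xy' yz'.
have [sb _ _] := thv_split_midv xy yz; have [sb' _ _] := thv_split_midv xy' yz'.
case: e => e1 eb e2; have exz : thv theta x z = thv theta x' z'.
  by rewrite [LHS]surjective_pairing e1 e2 -surjective_pairing.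
case: (thv_inj (lt_trans xy yz) (lt_trans xy' yz') exz) => ex ez; subst x' z'.
rewrite -eb in sb'.
suff <- : y = y' by [].
case: sb => [[h1 h2]|[h1 h2]]; case: sb' => [[h1' h2']|[h1' h2']].
- by case: (thv_inj xy xy' (etrans h1 (esym h1'))).
- by case: (thv_inj xy yz' (etrans h1 (esym h2'))) => _ zy; move: yz; rewrite zy ltxx.
- by case: (thv_inj yz xy' (etrans h2 (esym h1'))) => _ zy; move: yz'; rewrite -zy ltxx.
- by case: (thv_inj yz yz' (etrans h2 (esym h2'))).
Qed.

Lemma thv_split_surj (a b c : X) : a < b -> b < c ->
  exists x y z, [/\ x < y, y < z, thv theta x z = (a, c) & thv_split x y z b].
Proof.
move=> ab bc; have abc : ((a, b, c).1.1 < (a, b, c).1.2) && ((a, b, c).1.2 < (a, b, c).2).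
  by rewrite /= ab bc.
have [g _ gK] := injF_bij theta_triple_inj.
move: (gK (exist _ (a, b, c) abc)); case: (g _) => [[[x y] z] /andP [/= xy yz]] /(congr1 val) /=.
have [sb _ _] := thv_split_midv xy yz; case=> e1 <- e2.
by exists x, y, z; split => //; rewrite [LHS]surjective_pairing e1 e2.
Qed.

Lemma thv_compose (x y z w : X) : x < y -> z < w ->
  (thv theta x y).2 = (thv theta z w).1 -> y = z \/ w = x.
Proof.
move=> xy zw eb; have ab := thv_lt xy; have bc := thv_lt zw; rewrite eb in ab.
have [x' [y' [z' [xy' yz' e [[h1 h2]|[h1 h2]]]]]] := thv_split_surj ab bc;
  rewrite e /= in h1 h2.
- rewrite -eb -surjective_pairing in h1; rewrite -surjective_pairing in h2.
  by case: (thv_inj xy' xy h1) => _ <-; case: (thv_inj yz' zw h2) => <-; left.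
- rewrite -surjective_pairing in h1; rewrite -eb -surjective_pairing in h2.
  by case: (thv_inj xy' zw h1) => _ <-; case: (thv_inj yz' xy h2) => <-; right.
Qed.

Lemma lint_thv_ge (x y : X) : x < y ->
  (lint x y <= lint (thv theta x y).1 (thv theta x y).2)%N.
Proof.
move=> xy; have /chain_inP [s [size_s ss s_in]] := lint_chain_in (ltW xy).
set A := [:: x, y & s].
have As z : z \in s -> z \in A by rewrite !inE => ->; rewrite !orbT.
have [xA yA] : x \in A /\ y \in A by rewrite !inE !eqxx orbT.
have cA := interval_comparable (ltW xy) ss s_in.
have [f [r H]] := thv_on_chain cA.
have flt a b : a \in A -> b \in A -> a < b -> if r then f b < f a else f a < f b.
  by move=> aA bA ab; have := thv_lt ab; rewrite H //; case: (r).
have fle a b : a \in A -> b \in A -> a <= b -> if r then f b <= f a else f a <= f b.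
  move=> aA bA; rewrite le_eqVlt => /predU1P [-> | ab]; first by case: (r).
  by have := flt a b aA bA ab; case: (r) => /ltW.
have f_in z : z \in s -> if r then f y <= f z <= f x else f x <= f z <= f y.
  move=> zs; have /andP [xz zy] := allP s_in z zs.
  by have := fle x z xA (As z zs) xz; have := fle z y (As z zs) yA zy; case: (r) => -> ->.
rewrite H //; apply: lint_ge; apply/chain_inP; case: r {H fle} flt f_in => flt f_in /=.
- exists (rev (map f s)); split; first by rewrite size_rev size_map.
    rewrite rev_sorted; apply: (homo_sorted_in _ (allss s) ss) => a b /As aA /As bA.
    exact: flt.
  by apply/allP => w; rewrite mem_rev => /mapP [z zs ->]; apply: f_in.
- exists (map f s); split; first by rewrite size_map.
    apply: (homo_sorted_in _ (allss s) ss) => a b /As aA /As bA.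
    exact: flt.
  by apply/allP => w /mapP [z zs ->]; apply: f_in.
Qed.

(* theta never shortens an interval and permutes the intervals, so it preserves lengths. *)
Lemma lint_thv (x y : X) : x < y -> lint (thv theta x y).1 (thv theta x y).2 = lint x y.
Proof.
move=> xy; pose l (b : Bidx X) := lint (val b).1 (val b).2.
have lle b : (l b <= l (theta b))%N.
  by case: b => [[u v] uv]; rewrite /l -(thvE uv) lint_thv_ge.
have := leq_sum_eq lle (reindex_inj theta_inj) (exist _ (x, y) xy).
by rewrite /l -thvE => ->.
Qed.

End ThetaAction.

Lemma thvK (d : Order.disp_t) (X : finPOrderType d) (theta th' : Bidx X -> Bidx X) :
  cancel theta th' ->
  forall x y : X, x < y -> thv th' (thv theta x y).1 (thv theta x y).2 = (x, y).
Proof.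
by move=> thK x y xy; rewrite (thvE theta xy) /thv -surjective_pairing valK thK.
Qed.

Lemma thv_inv_eq (d : Order.disp_t) (X : finPOrderType d) (theta th' : Bidx X -> Bidx X) :
  cancel theta th' -> cancel th' theta -> forall u v x y : X, u < v -> x < y ->
  (thv th' u v == (x, y)) = ((u, v) == thv theta x y).
Proof.
move=> thK thK' u v x y uv xy; apply/eqP/eqP => e.
  by have := thvK thK' uv; rewrite e.
by have := thvK thK xy; rewrite -e.
Qed.

Lemma cnt_cons (d : Order.disp_t) (X : finPOrderType d) (P : X -> X -> bool) u0 v s :
  cnt P u0 (v :: s) = (P u0 v + cnt P v s)%N.
Proof.
rewrite /cnt /= -[1%N]/(1 + 0)%N iotaDl count_map; congr addn.
apply: eq_in_count => i; rewrite mem_iota add0n /= => lt_is.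
by rewrite (set_nth_default v u0) ?(set_nth_default v u0 lt_is) //; exact: ltnW.
Qed.

Lemma last_rev_belast (T : Type) (x : T) (s : seq T) : last (last x s) (rev (belast x s)) = x.
Proof. by case: s => //= y s; rewrite rev_cons last_rcons. Qed.

Section Potential.
Variables (d : Order.disp_t) (X : finPOrderType d) (theta th' : Bidx X -> Bidx X).
Hypotheses (thK : cancel theta th') (thK' : cancel th' theta).
Hypothesis theta_mono : monotone_max_chains theta.
Hypothesis theta_adm : admissible theta.
Hypothesis X_conn : connected_poset X.
Local Notation adj := (@adj d X).

Definition flow (z a b : X) : int :=
  ((s_plus theta z a b)%:Z - (s_minus theta z a b)%:Z
   - (t_plus theta z a b)%:Z + (t_minus theta z a b)%:Z)%R.

Fixpoint walk_flow (z u0 : X) (s : seq X) : int :=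
  if s is v :: s' then (flow z u0 v + walk_flow z v s')%R else 0%R.

Lemma walk_flowE (z u0 : X) (s : seq X) : walk_flow z u0 s =
  ((cnt (s_plus theta z) u0 s)%:Z - (cnt (s_minus theta z) u0 s)%:Z
   - (cnt (t_plus theta z) u0 s)%:Z + (cnt (t_minus theta z) u0 s)%:Z)%R.
Proof. by elim: s u0 => [|v s IH] u0 //=; rewrite IH !cnt_cons /flow !PoszD; lia. Qed.

Lemma walk_flow_closed (z u0 : X) (s : seq X) : path adj u0 s -> last u0 s = u0 -> walk_flow z u0 s = 0%R.
Proof. by move=> p l; have := theta_adm p l z; rewrite walk_flowE; lia. Qed.

Lemma walk_flow_cat (z u0 : X) (s1 s2 : seq X) :
  walk_flow z u0 (s1 ++ s2) = (walk_flow z u0 s1 + walk_flow z (last u0 s1) s2)%R.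
Proof. by elim: s1 u0 => [|v s IH] u0 /=; rewrite ?add0r // IH addrA. Qed.

Lemma flowC (z a b : X) : flow z b a = (- flow z a b)%R.
Proof. rewrite /flow /s_plus /s_minus /t_plus /t_minus; lia. Qed.

Lemma walk_flow_rev (z u0 : X) (s : seq X) :
  walk_flow z (last u0 s) (rev (belast u0 s)) = (- walk_flow z u0 s)%R.
Proof.
elim: s u0 => [|v s IH] u0 /=; first by rewrite oppr0.
rewrite rev_cons -cats1 walk_flow_cat IH last_rev_belast.
by rewrite -[walk_flow z v [:: u0]]/(flow z v u0 + 0)%R addr0 flowC [RHS]opprD addrC.
Qed.

Variable z0 : X.

Lemma base_walk_ex (u : X) : exists s, path adj z0 s && (last z0 s == u).
Proof. by have [s [p l]] := X_conn z0 u; exists s; rewrite p l eqxx. Qed.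

Definition base_walk (u : X) : seq X := xchoose (base_walk_ex u).

Lemma base_walkP (u : X) : path adj z0 (base_walk u) /\ last z0 (base_walk u) = u.
Proof. by have /andP [p /eqP l] := xchooseP (base_walk_ex u). Qed.

Definition potential (z u : X) : int := walk_flow z z0 (base_walk u).

Lemma potential_base (z : X) : potential z z0 = 0%R.
Proof. by have [p l] := base_walkP z0; exact: walk_flow_closed p l. Qed.

Lemma potential_adj (z a b : X) : adj a b -> potential z b = (potential z a + flow z a b)%R.
Proof.
move=> ab; have [pa la] := base_walkP a; have [pb lb] := base_walkP b.
set w := base_walk a ++ b :: rev (belast z0 (base_walk b)).
have pw : path adj z0 w.
  rewrite cat_path pa la /= ab /=; rewrite -{1}lb rev_path.
  by apply: sub_path pb => u v; rewrite /Defs.adj orbC.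
have lw : last z0 w = z0 by rewrite last_cat /= -{1}lb last_rev_belast.
have rev_b := walk_flow_rev z z0 (base_walk b); rewrite lb in rev_b.
have := walk_flow_closed z pw lw; rewrite walk_flow_cat la /= rev_b /potential; lia.
Qed.

Definition incidence (z : X) (p : X * X) : int := ((p.1 == z)%:Z - (p.2 == z)%:Z)%R.

Lemma flow_lt (z a b : X) : a < b -> flow z a b = incidence z (thv th' a b).
Proof.
move=> ab; rewrite /flow /s_minus /t_minus (lt_gtF ab) /= /incidence.
have splus : s_plus theta z a b = ((thv th' a b).1 == z).
  rewrite /s_plus ab; apply/existsP/eqP => [[w /andP [zw /eqP e]]|<-].
    by have := thvK thK zw; rewrite e => ->.
  by exists (thv th' a b).2; rewrite (thv_lt _ ab) (thvK thK') ?eqxx.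
have tplus : t_plus theta z a b = ((thv th' a b).2 == z).
  rewrite /t_plus ab; apply/existsP/eqP => [[w /andP [wz /eqP e]]|<-].
    by have := thvK thK wz; rewrite e => ->.
  by exists (thv th' a b).1; rewrite (thv_lt _ ab) (thvK thK') ?eqxx.
by rewrite splus tplus subr0 addr0.
Qed.

Lemma incidence_split (z a b c : X) : a < b -> b < c ->
  incidence z (thv th' a c) = (incidence z (thv th' a b) + incidence z (thv th' b c))%R.
Proof.
move=> ab bc; have [x [y [w [xy yw e sp]]]] := thv_split_surj (can_inj thK) theta_mono ab bc.
have -> : thv th' a c = (x, w) by have := thvK thK (lt_trans xy yw); rewrite e.
rewrite /thv_split e /= in sp; case: sp => [[h1 h2]|[h1 h2]].
- have -> : thv th' a b = (x, y) by have := thvK thK xy; rewrite h1.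
  have -> : thv th' b c = (y, w) by have := thvK thK yw; rewrite h2.
  by rewrite /incidence /=; lia.
- have -> : thv th' a b = (y, w) by have := thvK thK yw; rewrite h2.
  have -> : thv th' b c = (x, y) by have := thvK thK xy; rewrite h1.
  by rewrite /incidence /=; lia.
Qed.

Lemma potential_lt (z a b : X) : a < b ->
  potential z b = (potential z a + incidence z (thv th' a b))%R.
Proof.
have [n] := ubnP #|[pred t | (a <= t) && (t <= b)]|.
elim: n a b => // n IH a b lt_itv_n ab.
have [cov|] := boolP (covers b a).
  by rewrite -flow_lt //; apply: potential_adj; rewrite /Defs.adj cov orbT.
rewrite /covers ab negb_forall => /existsP [w]; rewrite negbK => /andP [aw wb].
rewrite ltnS in lt_itv_n.
have lt_n u v : a <= u -> v <= b -> (u != a) || (v != b) ->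
    (#|[pred t | (u <= t)%O && (t <= v)%O]| < n)%N.
  by move=> au vb uv; exact: leq_trans (card_interval_lt (ltW ab) au vb uv) lt_itv_n.
rewrite (IH w b) ?(IH a w) ?(incidence_split z aw wb) ?addrA ?lt_n ?(ltW aw) ?(ltW wb) //.
  by rewrite (lt_eqF wb) orbT.
by rewrite (gt_eqF aw).
Qed.

End Potential.

Section IncidenceAlgebra.
Local Open Scope ring_scope.
Variables (d : Order.disp_t) (X : finPOrderType d) (K : fieldType).
Local Notation ifun := {ffun X * X -> K}.
Local Notation imul := (@imul d X K).
Local Notation ilie := (@ilie d X K).
Local Notation iscale := (@iscale d X K).
Local Notation eu := (@eu d X K).

Lemma imulDl (f g h : ifun) : imul (f + g) h = imul f h + imul g h.
Proof. by apply/ffunP => p; rewrite !ffunE -big_split; apply: eq_bigr => t _; rewrite ffunE mulrDl. Qed.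

Lemma imulDr (f g h : ifun) : imul h (f + g) = imul h f + imul h g.
Proof. by apply/ffunP => p; rewrite !ffunE -big_split; apply: eq_bigr => t _; rewrite ffunE mulrDr. Qed.

Lemma imul0l (f : ifun) : imul 0 f = 0.
Proof. by apply/ffunP => p; rewrite !ffunE big1 // => t _; rewrite ffunE mul0r. Qed.

Lemma imul0r (f : ifun) : imul f 0 = 0.
Proof. by apply/ffunP => p; rewrite !ffunE big1 // => t _; rewrite ffunE mulr0. Qed.

Lemma imulZl (a : K) (f g : ifun) : imul (iscale a f) g = iscale a (imul f g).
Proof. by apply/ffunP => p; rewrite !ffunE mulr_sumr; apply: eq_bigr => t _; rewrite ffunE mulrA. Qed.

Lemma imulZr (a : K) (f g : ifun) : imul f (iscale a g) = iscale a (imul f g).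
Proof. by apply/ffunP => p; rewrite !ffunE mulr_sumr; apply: eq_bigr => t _; rewrite ffunE mulrCA. Qed.

Lemma iscaleDr (a : K) (f g : ifun) : iscale a (f + g) = iscale a f + iscale a g.
Proof. by apply/ffunP => p; rewrite !ffunE mulrDr. Qed.

Lemma iscaleBr (a : K) (f g : ifun) : iscale a (f - g) = iscale a f - iscale a g.
Proof. by apply/ffunP => p; rewrite !ffunE mulrBr. Qed.

Lemma iscaler0 (a : K) : iscale a 0 = 0.
Proof. by apply/ffunP => p; rewrite !ffunE mulr0. Qed.

Lemma iscaleA (a b : K) (f : ifun) : iscale a (iscale b f) = iscale (a * b) f.
Proof. by apply/ffunP => p; rewrite !ffunE mulrA. Qed.

Lemma iscale_sumr (I : finType) (P : pred I) (F : I -> ifun) (a : K) :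
  iscale a (\sum_(i | P i) F i) = \sum_(i | P i) iscale a (F i).
Proof. exact: (big_morph (iscale a) (iscaleDr a) (iscaler0 a)). Qed.

Lemma ilieDl (f g h : ifun) : ilie (f + g) h = ilie f h + ilie g h.
Proof. by rewrite /Defs.ilie imulDl imulDr opprD addrACA. Qed.

Lemma ilieDr (f g h : ifun) : ilie h (f + g) = ilie h f + ilie h g.
Proof. by rewrite /Defs.ilie imulDl imulDr opprD addrACA. Qed.

Lemma ilie0l (f : ifun) : ilie 0 f = 0.
Proof. by rewrite /Defs.ilie imul0l imul0r subr0. Qed.

Lemma ilie0r (f : ifun) : ilie f 0 = 0.
Proof. by rewrite /Defs.ilie imul0l imul0r subr0. Qed.

Lemma ilieZl (a : K) (f g : ifun) : ilie (iscale a f) g = iscale a (ilie f g).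
Proof. by rewrite /Defs.ilie imulZl imulZr iscaleBr. Qed.

Lemma ilieZr (a : K) (f g : ifun) : ilie f (iscale a g) = iscale a (ilie f g).
Proof. by rewrite /Defs.ilie imulZl imulZr iscaleBr. Qed.

Lemma ilie_anti (f g : ifun) : ilie f g = - ilie g f.
Proof. by rewrite /Defs.ilie opprB. Qed.

Lemma ilie_suml (I : finType) (P : pred I) (F : I -> ifun) (g : ifun) :
  ilie (\sum_(i | P i) F i) g = \sum_(i | P i) ilie (F i) g.
Proof. exact: (big_morph (ilie^~ g) (fun f h => ilieDl f h g) (ilie0l g)). Qed.

Lemma ilie_sumr (I : finType) (P : pred I) (F : I -> ifun) (g : ifun) :
  ilie g (\sum_(i | P i) F i) = \sum_(i | P i) ilie g (F i).
Proof. exact: (big_morph (ilie g) (fun f h => ilieDr f h g) (ilie0r g)). Qed.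

Lemma imul_eu (a b c e : X) : imul (eu a b) (eu c e) =
  if (b == c) && (a <= b)%O && (b <= e)%O then eu a e else 0.
Proof.
apply/ffunP => [[u v]]; rewrite !ffunE /=.
rewrite (eq_bigr (fun t => if t == b then
    (if (u == a) && (b == c) && (v == e) then 1 else 0) else 0)); last first.
  move=> t _; rewrite !ffunE !xpair_eqE /=.
  case: (eqVneq t b) => [->|tb]; last by rewrite andbF mul0r.
  by rewrite andbT; case: (u == a); case: (b == c); case: (v == e); rewrite ?mulr1 ?mul0r ?mulr0.
rewrite sumr_if_eq (fun_if (fun f : ifun => f (u, v))) !ffunE xpair_eqE.
case: (eqVneq u a) => [->|]; case: (eqVneq v e) => [->|]; rewrite /= ?andbF ?if_same //.
by rewrite andbT; case: (b == c); rewrite /= ?if_same.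
Qed.

Definition idiag (h : X -> K) : ifun := [ffun p => if p.1 == p.2 then h p.1 else 0].

Lemma imul_idiagl (h : X -> K) (f : ifun) :
  imul (idiag h) f = [ffun p => if (p.1 <= p.2)%O then h p.1 * f p else 0].
Proof.
apply/ffunP => [[u v]]; rewrite !ffunE /=.
under eq_bigr => t _ do rewrite ffunE /= [u == t]eq_sym (fun_if (fun z => z * f (t, v))) mul0r.
by rewrite sumr_if_eq le_refl.
Qed.

Lemma imul_idiagr (h : X -> K) (f : ifun) :
  imul f (idiag h) = [ffun p => if (p.1 <= p.2)%O then f p * h p.2 else 0].
Proof.
apply/ffunP => [[u v]]; rewrite !ffunE /=.
under eq_bigr => t _ do rewrite ffunE /= (fun_if (fun z => f (u, t) * z)) mulr0.
by rewrite sumr_if_eq le_refl andbT.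
Qed.

Lemma ilie_idiag_eu (h : X -> K) (a b : X) : (a <= b)%O ->
  ilie (idiag h) (eu a b) = iscale (h a - h b) (eu a b).
Proof.
move=> ab; apply/ffunP => [[u v]]; rewrite /Defs.ilie imul_idiagl imul_idiagr !ffunE /= xpair_eqE.
by case: (eqVneq u a) => [->|]; case: (eqVneq v b) => [->|] /=;
  rewrite ?ab ?mulr1 ?mul1r ?mulr0 ?mul0r ?subrr ?if_same ?subr0 ?mulrBl.
Qed.

Lemma ilie_idiag (h1 h2 : X -> K) : ilie (idiag h1) (idiag h2) = 0.
Proof.
apply/ffunP => [[u v]]; rewrite /Defs.ilie !imul_idiagl !ffunE /=.
case: (eqVneq u v) => [<-|uv]; first by rewrite le_refl [h2 u * _]mulrC subrr.
by rewrite !mulr0 !if_same subrr.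
Qed.

Lemma eu_idiag (x : X) : eu x x = idiag (fun u => (u == x)%:R).
Proof.
apply/ffunP => [[u v]]; rewrite !ffunE /= xpair_eqE.
by case: (eqVneq u x) => [->|ux] /=; [rewrite eq_sym; case: eqP | case: ifP].
Qed.

Lemma incid_sum_eu (f : ifun) : incid f ->
  f = \sum_(p : X * X | (p.1 <= p.2)%O) iscale (f p) (eu p.1 p.2).
Proof.
move=> /forallP f_incid; apply/ffunP => q; rewrite sum_ffunE.
under eq_bigr => p _ do
  rewrite !ffunE -surjective_pairing (fun_if (fun z => f p * z)) mulr1 mulr0 [q == p]eq_sym.
rewrite sumr_if_eq; case: ifP => // nq.
by have := f_incid q; rewrite nq => /eqP.
Qed.

Lemma incid_by_cases (A B : X * X -> K) :
  incid [ffun p => if (p.1 < p.2)%O then A p else if p.1 == p.2 then B p else 0].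
Proof.
apply/forallP => [[u v]] /=; apply/implyP => nuv; rewrite ffunE /=.
have [euv|_] := eqVneq u v; first by rewrite euv le_refl in nuv.
by rewrite (contraNF (@ltW _ _ u v) nuv).
Qed.

Lemma incidB (f g : ifun) : incid f -> incid g -> incid (f - g).
Proof.
move=> /forallP f_incid /forallP g_incid; apply/forallP => p; apply/implyP => np.
by move: (f_incid p) (g_incid p); rewrite np !ffunE => /eqP -> /eqP ->; rewrite subrr.
Qed.

Lemma projLZ (i : nat) (a : K) (f : ifun) : projL i (iscale a f) = iscale a (projL i f).
Proof. by apply/ffunP => p; rewrite !ffunE; case: ifP; rewrite ?mulr0. Qed.

Lemma projL_eu (x y : X) : (x <= y)%O -> projL (lint x y) (eu x y) = eu x y.
Proof.
move=> xy; apply/ffunP => p; rewrite !ffunE.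
by case: (eqVneq p (x, y)) => [-> /=|]; rewrite ?xy ?eqxx ?if_same.
Qed.

Lemma projL_idiag (h : X -> K) : projL 0 (idiag h) = idiag h.
Proof.
apply/ffunP => [[u v]]; rewrite !ffunE /=.
by case: (eqVneq u v) => [<-|]; rewrite ?le_refl ?lint_refl ?if_same.
Qed.

End IncidenceAlgebra.

Section LieAutomorphism.
Local Open Scope ring_scope.
Variables (d : Order.disp_t) (X : finPOrderType d) (K : fieldType).
Variables (theta th' : Bidx X -> Bidx X) (sigma : X -> X -> K).
Hypotheses (thK : cancel theta th') (thK' : cancel th' theta).
Hypothesis X_conn : connected_poset X.
Hypothesis theta_adm : admissible theta.
Hypothesis theta_mono : monotone_max_chains theta.
Hypothesis sigma_neq0 : forall x y : X, (x < y)%O -> sigma x y != 0.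
Hypothesis sigma_compat : compatible theta sigma.
Variable z0 : X.

Local Notation ifun := {ffun X * X -> K}.
Local Notation eu := (eu K).
Local Notation thE := (thE K theta).
Local Notation adj := (@adj d X).

Definition diag_coef (x u : X) : K := (x == z0)%:R - (potential theta X_conn z0 x u)%:~R.

Lemma diag_coef_base (x : X) : diag_coef x z0 = (x == z0)%:R.
Proof. by rewrite /diag_coef potential_base //; exact: subr0. Qed.

Lemma diag_coef_lt (x u v : X) : (u < v)%O ->
  diag_coef x u - diag_coef x v = ((thv th' u v).1 == x)%:R - ((thv th' u v).2 == x)%:R.
Proof.
move=> uv; rewrite /diag_coef (potential_lt thK thK' theta_mono theta_adm X_conn z0 x uv).
by rewrite /incidence intrD intrB; ring.
Qed.

Lemma diag_coef_inj (lam : X -> K) :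
  (forall u, \sum_x lam x * diag_coef x u = 0) -> forall x, lam x = 0.
Proof.
move=> lam0.
have lam_z0 : lam z0 = 0.
  have := lam0 z0; under eq_bigr => x _ do rewrite diag_coef_base eq_sym.
  by rewrite sumr_mul_eq.
have lam_lt y z : (y < z)%O -> lam y = lam z.
  move=> yz; have := congr2 (fun a b => a - b) (lam0 (thv theta y z).1) (lam0 (thv theta y z).2).
  rewrite subrr -sumrB; under eq_bigr => x _ do rewrite -mulrBr diag_coef_lt ?thv_lt // (thvK thK yz) mulrBr.
  by rewrite sumrB !sumr_mul_eq => /eqP; rewrite subr_eq0 => /eqP.
have lam_path u s : path adj u s -> lam (last u s) = lam u.
  elim: s u => //= v s IH u /andP [uv /IH ->].
  by case/orP: uv => /andP [lt_uv _]; rewrite (lam_lt _ _ lt_uv).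
by move=> x; have [s [p <-]] := X_conn z0 x; rewrite lam_path.
Qed.

Definition Phi (f : ifun) : ifun := [ffun p : X * X =>
  if (p.1 < p.2)%O then sigma (thv th' p.1 p.2).1 (thv th' p.1 p.2).2 * f (thv th' p.1 p.2)
  else if p.1 == p.2 then \sum_x f (x, x) * diag_coef x p.1 else 0].

Lemma Phi_incid (f : ifun) : incid (Phi f).
Proof. exact: incid_by_cases. Qed.

Lemma Phi_is_additive : {morph Phi : f g / f - g}.
Proof.
move=> f g; apply/ffunP => p; rewrite !ffunE; case: ifP => _; first by rewrite mulrBr.
case: ifP => _; last by rewrite subr0.
by rewrite -sumrB; apply: eq_bigr => x _; rewrite !ffunE mulrBl.
Qed.

HB.instance Definition _ := GRing.isZmodMorphism.Build ifun ifun Phi Phi_is_additive.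

Lemma PhiZ (a : K) (f : ifun) : Phi (iscale a f) = iscale a (Phi f).
Proof.
apply/ffunP => p; rewrite !ffunE; case: ifP => _; first by rewrite mulrCA.
case: ifP => _; last by rewrite mulr0.
by rewrite mulr_sumr; apply: eq_bigr => x _; rewrite ffunE mulrA.
Qed.

Lemma Phi_eu_lt (x y : X) : (x < y)%O -> Phi (eu x y) = iscale (sigma x y) (thE x y).
Proof.
move=> xy; apply/ffunP => [[u v]]; rewrite !ffunE /= -surjective_pairing.
have [uv|nuv] := boolP (u < v)%O.
  rewrite (thv_inv_eq thK thK') //; case: eqP => [e|_]; last by rewrite !mulr0.
  by have /eqP -> : thv th' u v == (x, y) by rewrite (thv_inv_eq thK thK') // e.
have -> : ((u, v) == thv theta x y) = false.
  by apply: contraNF nuv => /eqP e; have := thv_lt theta xy; rewrite -e.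
rewrite mulr0; case: ifP => // _; rewrite big1 // => t _; rewrite ffunE xpair_eqE.
by case: (eqVneq t x) => [->|] /=; rewrite ?(lt_eqF xy) mul0r.
Qed.

Lemma Phi_eu_diag (x : X) : Phi (eu x x) = idiag (diag_coef x).
Proof.
apply/ffunP => [[u v]]; rewrite !ffunE /=.
have [uv|nuv] := boolP (u < v)%O.
  rewrite (lt_eqF uv); case: eqP => [e|_]; last by rewrite mulr0.
  by have := thv_lt th' uv; rewrite e ltxx.
case: ifP => // _; under eq_bigr => t _ do
  rewrite ffunE xpair_eqE andbb (fun_if (fun c => c * diag_coef t u)) mul1r mul0r.
by rewrite sumr_if_eq.
Qed.

Lemma Phi_lie_diag_lt (x y z : X) : (y < z)%O ->
  Phi (ilie (eu x x) (eu y z)) = ilie (Phi (eu x x)) (Phi (eu y z)).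
Proof.
move=> yz; have uv := thv_lt theta yz.
rewrite eu_idiag ilie_idiag_eu ?(ltW yz) // PhiZ -eu_idiag Phi_eu_diag Phi_eu_lt //.
rewrite ilieZr /thE ilie_idiag_eu ?(ltW uv) // diag_coef_lt // (thvK thK yz) /=.
by rewrite !iscaleA mulrC.
Qed.

Lemma Phi_lie_chain (x y w : X) : (x < y)%O -> (y < w)%O ->
  Phi (ilie (eu x y) (eu y w)) = ilie (Phi (eu x y)) (Phi (eu y w)).
Proof.
move=> xy yw; have xw := lt_trans xy yw.
rewrite /Defs.ilie !imul_eu eqxx (ltW xy) (ltW yw) (gt_eqF xw) /= subr0.
rewrite !Phi_eu_lt // !imulZl !imulZr.
have [sp ab bc] := thv_split_midv theta_mono xy yw; have ac := lt_trans ab bc.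
have [sigma_mul sigma_mulN] := sigma_compat xy yw.
case: sp => [[exy eyw]|[exy eyw]].
- have e : thE x w = imul (thE x y) (thE y w).
    by rewrite /thE exy eyw /= imul_eu eqxx (ltW ab) (ltW bc).
  by rewrite (sigma_mul e) -e /thE exy eyw /= imul_eu (gt_eqF ac) /= !iscaler0 subr0 iscaleA.
- have e : thE x w = imul (thE y w) (thE x y).
    by rewrite /thE exy eyw /= imul_eu eqxx (ltW ab) (ltW bc).
  rewrite (sigma_mulN e) e /thE exy eyw /= !imul_eu eqxx (ltW ab) (ltW bc) (gt_eqF ac) /=.
  rewrite !iscaler0 sub0r; apply/ffunP => p.
  by rewrite !ffunE mulNr mulrA [sigma y w * _]mulrC.
Qed.

Lemma Phi_lie_eu (a1 b1 a2 b2 : X) : (a1 <= b1)%O -> (a2 <= b2)%O ->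
  Phi (ilie (eu a1 b1) (eu a2 b2)) = ilie (Phi (eu a1 b1)) (Phi (eu a2 b2)).
Proof.
rewrite le_eqVlt => /predU1P [<- | lt1]; rewrite le_eqVlt => /predU1P [<- | lt2].
- by rewrite !Phi_eu_diag !eu_idiag !ilie_idiag raddf0.
- exact: Phi_lie_diag_lt.
- by rewrite ilie_anti raddfN /= Phi_lie_diag_lt // -ilie_anti.
have [e1|ne1] := eqVneq b1 a2; first by subst a2; exact: Phi_lie_chain.
have [e2|ne2] := eqVneq b2 a1.
  by subst a1; rewrite ilie_anti raddfN /= Phi_lie_chain // -ilie_anti.
have no_comp (x y z w : X) : (x < y)%O -> (z < w)%O -> y != z -> w != x ->
    ((thv theta x y).2 == (thv theta z w).1) = false.
  move=> xy zw yz wx; apply/eqP => /(thv_compose (can_inj thK) theta_mono xy zw).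
  by case=> /eqP; rewrite ?(negPf yz) ?(negPf wx).
rewrite /Defs.ilie !imul_eu (negPf ne1) (negPf ne2) /= subr0 raddf0.
rewrite !Phi_eu_lt // !imulZl !imulZr /thE !imul_eu !no_comp //=.
by rewrite !iscaler0 subrr.
Qed.

Lemma Phi_lie (f g : ifun) : incid f -> incid g -> Phi (ilie f g) = ilie (Phi f) (Phi g).
Proof.
move=> /incid_sum_eu -> /incid_sum_eu ->.
rewrite ilie_suml !(raddf_sum Phi) /= ilie_suml; apply: eq_bigr => p le_p.
rewrite ilieZl !PhiZ ilieZl !ilie_sumr (raddf_sum Phi) /= !iscale_sumr; apply: eq_bigr => q le_q.
by rewrite ilieZr !PhiZ ilieZr Phi_lie_eu.
Qed.

Lemma Phi_eq0 (h : ifun) : incid h -> Phi h = 0 -> h = 0.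
Proof.
move=> /forallP h_incid h0; apply/ffunP => [[u v]]; rewrite ffunE.
have [uv|nuv] := boolP (u < v)%O.
  have := congr1 (fun F : ifun => F (thv theta u v)) h0.
  rewrite !ffunE (thv_lt theta uv) (thvK thK uv) /= => /eqP.
  by rewrite mulf_eq0 (negPf (sigma_neq0 uv)) => /eqP.
have [euv|neq_uv] := eqVneq u v.
  rewrite -euv; apply: (diag_coef_inj (lam := fun x => h (x, x))) => w.
  by have := congr1 (fun F : ifun => F (w, w)) h0; rewrite !ffunE /= ltxx eqxx.
by apply/eqP; have := h_incid (u, v); rewrite /= le_eqVlt negb_or neq_uv nuv.
Qed.

Lemma Phi_surj (g : ifun) : incid g -> exists2 f, incid f & Phi f = g.
Proof.
move=> /forallP g_incid.
have [lam lamP] := square_system_solvable diag_coef_inj (fun u => g (u, u)).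
exists [ffun p : X * X => if (p.1 < p.2)%O then g (thv theta p.1 p.2) / sigma p.1 p.2
                         else if p.1 == p.2 then lam p.1 else 0]; first exact: incid_by_cases.
apply/ffunP => [[u v]]; rewrite !ffunE /=.
have [uv|nuv] := boolP (u < v)%O.
  have pre_lt := thv_lt th' uv.
  by rewrite pre_lt (thvK thK' uv) mulrC -mulrA mulVf ?mulr1 ?sigma_neq0.
have [<-|neq_uv] := eqVneq u v.
  by rewrite -lamP; apply: eq_bigr => x _; rewrite ffunE /= ltxx eqxx.
by apply/esym/eqP; have := g_incid (u, v); rewrite /= le_eqVlt negb_or neq_uv nuv.
Qed.

Lemma Phi_lie_aut : lie_aut Phi.
Proof.
split=> [f _ | a f g _ _ | f g f_incid g_incid | g | f g].
- exact: Phi_incid.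
- by rewrite raddfD /= PhiZ.
- move/eqP; rewrite -subr_eq0 -raddfB => /eqP /Phi_eq0 fg0.
  by apply/eqP; rewrite -subr_eq0 fg0 ?incidB.
- exact: Phi_surj.
- exact: Phi_lie.
Qed.

Lemma Phi_graded (x y : X) : (x <= y)%O -> projL (lint x y) (Phi (eu x y)) = Phi (eu x y).
Proof.
rewrite le_eqVlt => /predU1P [<- | xy]; first by rewrite Phi_eu_diag lint_refl projL_idiag.
rewrite Phi_eu_lt // projLZ /thE -(lint_thv (can_inj thK) theta_mono xy) projL_eu //.
exact: ltW (thv_lt theta xy).
Qed.

End LieAutomorphism.

Lemma lie_aut_id (d : Order.disp_t) (X : finPOrderType d) (K : fieldType) :
  lie_aut (@id {ffun X * X -> K}).
Proof. by split=> // g g_incid; exists g. Qed.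

Lemma elementary_graded (d : Order.disp_t) (X : finPOrderType d) (K : fieldType)
    (phi : {ffun X * X -> K} -> {ffun X * X -> K}) :
  lie_aut phi -> (forall x y : X, x <= y -> projL (lint x y) (phi (eu K x y)) = phi (eu K x y)) ->
  elementary phi.
Proof. by move=> phi_aut phi_graded; split=> //; exists phi; split=> // x y /phi_graded. Qed.

Theorem lemma5p16 (K : fieldType) (d : Order.disp_t) (X : finPOrderType d)
  (theta : Bidx X -> Bidx X) (sigma : X -> X -> K) :
  connected_poset X ->
  bijective theta ->
  admissible theta ->
  monotone_max_chains theta ->
  (forall x y : X, x < y -> sigma x y != 0%R) ->
  compatible theta sigma ->
  exists phi : {ffun X * X -> K} -> {ffun X * X -> K},
    elementary phi /\
    forall x y : X, x < y -> phi (eu K x y) = iscale (sigma x y) (thE K theta x y).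
Proof.
move=> X_conn [th' thK thK'] theta_adm theta_mono sigma_neq0 sigma_compat.
have [z0 _ | X0] := pickP (@predT X); last first.
  exists id; split=> [|x]; last by have := X0 x.
  by apply: elementary_graded (lie_aut_id _ _) _ => x y /projL_eu.
exists (Phi theta th' sigma X_conn z0); split=> [|x y]; last exact: Phi_eu_lt.
apply: elementary_graded => [|x y]; first exact: Phi_lie_aut.
exact: Phi_graded.
Qed.
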